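(* Let $T:\mathbb{R}^n\to\mathbb{R}^n$ be an averaged operator with $\mathrm{Fix}(T)\neq\emptyset$ and $\lim_{\|x\|\to\infty}\|x-T(x)\|=\infty$. Let $\{x^k\}$ be generated by the Safe-L2O method (described in the context) with $\alpha\in(0,1)$, where the safeguard sequence $\{\mu_k\}$ is updated by any one of the five schemes GS($\theta$), RT, AA, EMA($\theta$), RM($m$) defined in the context (with $\theta\in(0,1)$, $m\in\mathbb{N}$). Then: if the inequality $\|y^k-T(y^k)\|\le\alpha\mu_k$ holds for infinitely many $k$, we have $\mu_k\to0$. Consequently $\lim_{k\to\infty}d_{\mathrm{Fix}(T)}(x^k)=0$, and if $\{x^k\}$ has exactly one cluster point then $\{x^k\}$ converges to a point of $\mathrm{Fix}(T)$.
   Context: $\|\cdot\|$ is the Euclidean norm; $\mathrm{Fix}(T):=\{x:T(x)=x\}$; $d_C(x):=\inf\{\|x-y\|:y\in C\}$. $T$ is averaged if $T=(1-\lambda)\mathrm{Id}+\lambda Q$ with $\lambda\in(0,1)$ and $Q$ 1-Lipschitz. Safe-L2O method: fix maps $\mathcal{L}_k:\mathbb{R}^n\to\mathbb{R}^n$, the fallback operator $T$, $\alpha\in(0,1)$, $x^1\in\mathbb{R}^n$; set $\mu_1:=\|x^1-T(x^1)\|$. For $k=1,2,\dots$: $y^k:=\mathcal{L}_k(x^k)$; if $\|y^k-T(y^k)\|\le\alpha\mu_k$ set $x^{k+1}:=y^k$, else $x^{k+1}:=T(x^k)$; then compute $\mu_{k+1}$ by the chosen scheme. Write $r_j:=\|x^j-T(x^j)\|$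 and say that ''sufficient descent occurs at step $k$'' if $r_{k+1}\le\alpha\mu_k$. The schemes (in each, $\mu_{k+1}:=\mu_k$ whenever sufficient descent does not occur at step $k$): GS($\theta$): if sufficient descent occurs at step $k$, $\mu_{k+1}:=\theta\mu_k$. RT: if sufficient descent occurs at step $k$, $\mu_{k+1}:=r_{k+1}$. AA: with a counter $m_1:=0$; if sufficient descent occurs at step $k$, $\mu_{k+1}:=\frac{1}{m_k+1}(r_{k+1}+m_k\mu_k)$ and $m_{k+1}:=m_k+1$; otherwise $m_{k+1}:=m_k$. EMA($\theta$): if sufficient descent occurs at step $k$, $\mu_{k+1}:=\theta r_{k+1}+(1-\theta)\mu_k$. RM($m$): if sufficient descent occurs at step $k$, $\mu_{k+1}:=\max_{j\in\Xi_k} r_{j+1}$, where $\Xi_k$ is the set of the most recent $m$ indices $j\le k$ at which sufficient descent occurred (all such indices if there are fewer than $m$). *)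

From Stdlib Require Import Reals Lra List.
From mathcomp Require Import ssreflect ssrfun ssrbool eqtype ssrnat seq fintype bigop.
Open Scope R_scope.

Definition vec (n : nat) := 'I_n -> R.

Definition vsub {n} (x y : vec n) : vec n := fun i => x i - y i.

Definition norm {n} (x : vec n) : R :=
  sqrt (\big[Rplus/0]_(i < n) (x i * x i)).

Definition nonexpansive {n} (Q : vec n -> vec n) : Prop :=
  forall x y, norm (vsub (Q x) (Q y)) <= norm (vsub x y).

Definition averaged {n} (T : vec n -> vec n) : Prop :=
  exists (lam : R) (Q : vec n -> vec n),
    0 < lam < 1 /\ nonexpansive Q /\
    forall x i, T x i = (1 - lam) * x i + lam * Q x i.

Definition Fix {n} (T : vec n -> vec n) (x : vec n) : Prop := T x = x.

Definition res {n} (T : vec n -> vec n) (x : vec n) : R := norm (vsub x (T x)).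

Definition is_inf (S : R -> Prop) (r : R) : Prop :=
  (forall s, S s -> r <= s) /\ (forall b, (forall s, S s -> b <= s) -> b <= r).

(* the set {||x - y|| : y in C}; d_C(x) is its infimum *)
Definition dists {n} (C : vec n -> Prop) (x : vec n) (s : R) : Prop :=
  exists y, C y /\ s = norm (vsub x y).

Definition cluster_point {n} (x : nat -> vec n) (z : vec n) : Prop :=
  forall eps, 0 < eps -> forall N : nat, exists k, (N <= k)%nat /\ norm (vsub (x k) z) < eps.

Definition converges_to {n} (x : nat -> vec n) (z : vec n) : Prop :=
  forall eps, 0 < eps -> exists N : nat, forall k, (N <= k)%nat -> norm (vsub (x k) z) < eps.

Inductive scheme : Type :=
| GS (theta : R)
| RT
| AA
| EMA (theta : R)
| RM (m : nat).

Definition scheme_params (s : scheme) : Prop :=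
  match s with
  | GS theta => 0 < theta < 1
  | EMA theta => 0 < theta < 1
  | RM m => (1 <= m)%nat
  | _ => True
  end.

Section Update.
Context {n : nat} (T : vec n -> vec n) (alpha : R) (x : nat -> vec n) (mu : nat -> R).

Definition descent_dec (k : nat) : {res T (x k.+1) <= alpha * mu k} + {~ res T (x k.+1) <= alpha * mu k} :=
  Rle_dec (res T (x k.+1)) (alpha * mu k).

Fixpoint aa_count (k : nat) : nat :=
  match k with
  | O => O
  | S k' => match k' with
            | O => O
            | _ => (aa_count k' + (if descent_dec k' then 1 else 0))%nat
            end
  end.

Fixpoint descent_indices (k : nat) : list nat :=
  match k with
  | O => nil
  | S k' => if descent_dec (S k') then S k' :: descent_indices k' else descent_indices k'
  end.

Definition Xi (m k : nat) : list nat := firstn m (descent_indices k).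

Definition mu_next (s : scheme) (k : nat) : R :=
  if descent_dec k then
    match s with
    | GS theta => theta * mu k
    | RT => res T (x k.+1)
    | AA => (res T (x k.+1) + INR (aa_count k) * mu k) / (INR (aa_count k) + 1)
    | EMA theta => theta * res T (x k.+1) + (1 - theta) * mu k
    | RM m => fold_right Rmax 0 (map (fun j => res T (x j.+1)) (Xi m k))
    end
  else mu k.
End Update.

Definition safe_l2o {n} (T : vec n -> vec n) (L : nat -> vec n -> vec n)
  (alpha : R) (s : scheme) (x y : nat -> vec n) (mu : nat -> R) : Prop :=
  mu 1%nat = res T (x 1%nat) /\
  forall k : nat, (1 <= k)%nat ->
    y k = L k (x k) /\
    x k.+1 = (if Rle_dec (res T (y k)) (alpha * mu k) then y k else T (x k)) /\
    mu k.+1 = mu_next T alpha x mu s k.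

(* Under every scheme the safeguard mu is nonnegative and nonincreasing, and each
   accepted L2O step is a descent step, so descents happen infinitely often.  For GS,
   RT and EMA one descent shrinks mu by a fixed factor below 1; for RM the same
   happens with factor alpha once m descents have occurred after a given step; for AA
   the running average loses at least (1 - alpha) mu / (M + 1) at its M-th descent,
   and divergence of the harmonic series (compared with ln) forces mu to 0.  Since
   ||x^{k+1} - T x^{k+1}|| <= max(||x^k - T x^k||, alpha mu_k) by nonexpansiveness of
   T, the residuals tend to 0.  Coercivity then bounds the iterates, Bolzano-Weierstrass
   provides cluster points along any infinite set of indices, and continuity of the
   residual makes every cluster point a fixed point; both remaining claims follow. *)

From HB Require Import structures.
From Stdlib Require Import Reals Lra Lia List Classical FunctionalExtensionality ClassicalEpsilon.
From mathcomp Require Import ssreflect ssrfun ssrbool eqtype ssrnat seq fintype bigop.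
From mathcomp Require Import zify.
Open Scope R_scope.

HB.instance Definition _ := Monoid.isComLaw.Build R 0 Rplus
  (fun a b c => esym (Rplus_assoc a b c)) Rplus_comm Rplus_0_l.
HB.instance Definition _ := Monoid.isMulLaw.Build R 0 Rmult Rmult_0_l Rmult_0_r.
HB.instance Definition _ := Monoid.isAddLaw.Build R Rmult Rplus
  Rmult_plus_distr_r Rmult_plus_distr_l.

Lemma sum_ge0 (I : Type) (r : seq I) (P : pred I) (F : I -> R) :
  (forall i, 0 <= F i) -> 0 <= \big[Rplus/0]_(i <- r | P i) F i.
Proof. by move=> F_ge0; apply: big_ind => [|a b|i _] /=; [lra | lra | apply: F_ge0]. Qed.

Lemma sum_le (I : Type) (r : seq I) (F G : I -> R) :
  (forall i, F i <= G i) -> \big[Rplus/0]_(i <- r) F i <= \big[Rplus/0]_(i <- r) G i.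
Proof. by move=> FG; apply: big_ind2 => [|a b c d|i _] /=; [lra | lra | apply: FG]. Qed.

Lemma sum_const_ord n c : \big[Rplus/0]_(i < n) c = INR n * c.
Proof.
rewrite big_const_ord; elim: n => [|n IH]; first by rewrite /=; lra.
by rewrite iterS IH S_INR; lra.
Qed.

Section EuclideanNorm.
Context {n : nat}.
Implicit Types u v : vec n.

Definition dot u v := \big[Rplus/0]_(i < n) (u i * v i).

Lemma dot_self_ge0 u : 0 <= dot u u.
Proof. by apply: sum_ge0 => i; apply: Rle_0_sqr. Qed.

Lemma norm_ge0 u : 0 <= norm u.
Proof. exact: sqrt_pos. Qed.

Lemma norm_sqr u : norm u * norm u = dot u u.
Proof. by rewrite sqrt_sqrt //; apply: dot_self_ge0. Qed.

Lemma Rabs_coord_le_norm u i : Rabs (u i) <= norm u.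
Proof.
rewrite -sqrt_Rsqr_abs; apply: sqrt_le_1_alt.
rewrite (bigD1 i) //= /Rsqr.
rewrite -{1}(Rplus_0_r (u i * u i)); apply: Rplus_le_compat_l.
by apply: sum_ge0 => j; apply: Rle_0_sqr.
Qed.

Lemma coord_eq0_of_norm_le0 u i : norm u <= 0 -> u i = 0.
Proof.
move=> u0; apply: NNPP => /Rabs_pos_lt.
have := Rabs_coord_le_norm u i; lra.
Qed.

Lemma norm_scale u c : norm (fun i => c * u i) = Rabs c * norm u.
Proof.
rewrite /norm (eq_bigr (fun i => (c * c) * (u i * u i))) => [|i _]; last ring.
rewrite -big_distrr /= sqrt_mult; [|apply: Rle_0_sqr | apply: dot_self_ge0].
by rewrite sqrt_Rsqr_abs.
Qed.

Lemma cauchy_schwarz u v : dot u v * dot u v <= dot u u * dot v v.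
Proof.
set A := dot u u; set B := dot u v; set C := dot v v.
have [C0 | C_neq0] := Req_dec C 0.
  have v0 i : v i = 0.
    by apply: coord_eq0_of_norm_le0; rewrite /norm -/(dot v v) -/C C0 sqrt_0; lra.
  rewrite /B /dot (eq_bigr (fun _ => 0)) => [|i _]; last by rewrite v0; ring.
  rewrite big1_eq; have := dot_self_ge0 u; have := dot_self_ge0 v; nra.
(* 0 <= sum_i (C u_i - B v_i)^2 = C (C A - B^2) *)
have : 0 <= \big[Rplus/0]_(i < n) ((C * u i - B * v i) * (C * u i - B * v i)).
  by apply: sum_ge0 => i; apply: Rle_0_sqr.
rewrite (eq_bigr (fun i => (C * C) * (u i * u i) + ((- 2 * C * B) * (u i * v i)
                   + (B * B) * (v i * v i)))) => [|i _]; last ring.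
rewrite !big_split -!big_distrr /= -/(dot u u) -/(dot u v) -/(dot v v) -/A -/B -/C.
have := dot_self_ge0 v; rewrite -/C => C_ge0.
have C_gt0 : 0 < C by lra.
nra.
Qed.

Lemma norm_add_le u v : norm (fun i => u i + v i) <= norm u + norm v.
Proof.
have nu := norm_ge0 u; have nv := norm_ge0 v.
apply: Rsqr_incr_0_var; last lra.
rewrite /Rsqr norm_sqr /dot (eq_bigr (fun i => u i * u i + (2 * (u i * v i) + v i * v i)))
  => [|i _]; last ring.
rewrite !big_split -big_distrr /= -!/(dot _ _) -!norm_sqr.
have : dot u v <= norm u * norm v.
  apply: Rsqr_incr_0_var; last nra.
  have -> : (norm u * norm v)² = (norm u * norm u) * (norm v * norm v).
    by rewrite /Rsqr; ring.
  by rewrite !norm_sqr; apply: cauchy_schwarz.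
nra.
Qed.

Lemma norm_vsubC u v : norm (vsub u v) = norm (vsub v u).
Proof.
have -> : vsub u v = fun i => -1 * vsub v u i.
  by apply: functional_extensionality => i; rewrite /vsub; ring.
by rewrite norm_scale Rabs_Ropp Rabs_R1 Rmult_1_l.
Qed.

Lemma norm_vsub_le u v w : norm (vsub u w) <= norm (vsub u v) + norm (vsub v w).
Proof.
have -> : vsub u w = fun i => vsub u v i + vsub v w i.
  by apply: functional_extensionality => i; rewrite /vsub; ring.
exact: norm_add_le.
Qed.

Lemma norm_le_coord_bound u d :
  0 <= d -> (forall i, Rabs (u i) <= d) -> norm u <= sqrt (INR n) * d.
Proof.
move=> d_ge0 ud; rewrite -(sqrt_Rsqr d) // -sqrt_mult; [|exact: pos_INR|exact: Rle_0_sqr].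
apply: sqrt_le_1_alt; rewrite /Rsqr -sum_const_ord; apply: sum_le => i.
rewrite -/(Rsqr (u i)) Rsqr_abs /Rsqr.
have := ud i; have := Rabs_pos (u i); nra.
Qed.
End EuclideanNorm.

Section AveragedOperator.
Context {n : nat} {T : vec n -> vec n}.

Lemma Fix_of_res_le0 z : res T z <= 0 -> Fix T z.
Proof.
move=> r0; apply: functional_extensionality => i.
by have := coord_eq0_of_norm_le0 _ i r0; rewrite /vsub; lra.
Qed.

Hypothesis T_averaged : averaged T.

Lemma averaged_nonexpansive : nonexpansive T.
Proof.
have [lam [Q [lam_range [Q_nonexp T_def]]]] := T_averaged.
move=> a b.
have -> : vsub (T a) (T b) =
    fun i => (1 - lam) * vsub a b i + lam * vsub (Q a) (Q b) i.
  by apply: functional_extensionality => i; rewrite /vsub !T_def; ring.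
apply: Rle_trans (norm_add_le _ _) _.
rewrite !norm_scale !Rabs_right; try lra.
have := Q_nonexp a b; nra.
Qed.

Lemma res_T_le z : res T (T z) <= res T z.
Proof. exact: averaged_nonexpansive. Qed.

Lemma res_le_res_add z a : res T z <= res T a + 2 * norm (vsub a z).
Proof.
have := norm_vsub_le z a (T z); have := norm_vsub_le a (T a) (T z).
have := averaged_nonexpansive a z; rewrite /res (norm_vsubC z a); lra.
Qed.
End AveragedOperator.

Lemma cv0_of_nonincreasing (u : nat -> R) k0 :
  (forall k, (k0 <= k)%nat -> 0 <= u k) ->
  (forall k j, (k0 <= k)%nat -> (k <= j)%nat -> u j <= u k) ->
  (forall eps, 0 < eps -> exists k, (k0 <= k)%nat /\ u k < eps) -> Un_cv u 0.
Proof.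
move=> u_ge0 u_le u_small eps eps_gt0; have [k [k0k uk]] := u_small eps eps_gt0.
exists k => j /leP kj; rewrite /R_dist Rminus_0_r Rabs_right.
  by have := u_le k j k0k kj; lra.
by apply/Rle_ge/u_ge0/(leq_trans k0k).
Qed.

Lemma small_of_eventual_contraction (u : nat -> R) k0 q :
  0 <= q < 1 -> (forall k, (k0 <= k)%nat -> 0 <= u k) ->
  (forall k, (k0 <= k)%nat -> exists j, (k <= j)%nat /\ u j <= q * u k) ->
  forall eps, 0 < eps -> exists k, (k0 <= k)%nat /\ u k < eps.
Proof.
move=> q_range u_ge0 contract eps eps_gt0.
have iterate J : exists k, (k0 <= k)%nat /\ u k <= q ^ J * u k0.
  elim: J => [|J [k [k0k uk]]]; first by exists k0; split => //=; lra.
  have [j [kj uj]] := contract k k0k; exists j; split; first exact: leq_trans kj.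
  have := u_ge0 k k0k; rewrite /= Rmult_assoc; nra.
have u0 := u_ge0 k0 (leqnn k0).
have [J qJ] : exists J, q ^ J < eps / (u k0 + 1).
  have [J HJ] := pow_lt_1_zero q (ltac:(rewrite Rabs_right; lra))
                   (eps / (u k0 + 1)) (ltac:(apply: Rdiv_lt_0_compat; lra)).
  by exists J; have := HJ J (le_n J); apply: Rle_lt_trans; apply: Rle_abs.
have [k [k0k uk]] := iterate J; exists k; split => //.
have qJ_ge0 : 0 <= q ^ J by apply: pow_le; lra.
have : eps / (u k0 + 1) * (u k0 + 1) = eps by field; lra.
nra.
Qed.

Lemma Rdiv_le_of_le_mul a b c : 0 < b -> a <= c * b -> a / b <= c.
Proof.
move=> b_gt0 abc; apply: (Rmult_le_reg_r b) => //.
by rewrite /Rdiv Rmult_assoc Rinv_l; lra.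
Qed.

Lemma ln_succ_le t : 0 < t -> ln (t + 1) <= ln t + / t.
Proof.
move=> t_gt0; apply: Rnot_lt_le => /exp_increasing.
rewrite exp_ln; last lra.
rewrite exp_plus exp_ln //.
have := exp_ineq1_le (/ t); have := Rinv_r t; have := Rinv_0_lt_compat t t_gt0.
nra.
Qed.

Lemma ln_INR_unbounded B : exists M, forall m, (M <= m)%nat -> B < ln (INR m + 1).
Proof.
have [M M_big] := INR_unbounded (exp B); exists M => m /leP /le_INR Mm.
rewrite -[B]ln_exp; apply: ln_increasing; [exact: exp_pos | lra].
Qed.

Lemma fold_Rmax_ge0 (l : list R) : 0 <= fold_right Rmax 0 l.
Proof. elim: l => [|a l IH] /=; [lra | exact: Rle_trans IH (Rmax_r _ _)]. Qed.

Lemma In_firstn (A : Type) (a : A) k l : In a (firstn k l) -> In a l.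
Proof. by rewrite -{2}(firstn_skipn k l) => a_in; apply: in_or_app; left. Qed.

Lemma fold_Rmax_map_le (A : Type) (f : A -> R) (l : list A) c :
  0 <= c -> (forall a, In a l -> f a <= c) -> fold_right Rmax 0 (map f l) <= c.
Proof.
move=> c_ge0; elim: l => [|a l IH] /= lc; first lra.
by apply: Rmax_lub; [apply: lc; left | apply: IH => b lb; apply: lc; right].
Qed.

Lemma fold_Rmax_map_firstn_le (A : Type) (f : A -> R) (l : list A) a b : (a <= b)%nat ->
  fold_right Rmax 0 (map f (firstn a l)) <= fold_right Rmax 0 (map f (firstn b l)).
Proof.
elim: l a b => [|t l IH] [|a] [|b] //= ab; rewrite ?firstn_nil /=; try lra.
- exact: Rle_trans (fold_Rmax_ge0 _) (Rmax_r _ _).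
- exact: Rle_max_compat_l (IH a b ab).
Qed.

Section SafeL2O.
Context {n : nat} {T : vec n -> vec n} {L : nat -> vec n -> vec n}.
Context {alpha : R} {s : scheme} {x y : nat -> vec n} {mu : nat -> R}.
Hypothesis safe : safe_l2o T L alpha s x y mu.
Hypothesis alpha_range : 0 < alpha < 1.
Hypothesis s_params : scheme_params s.

Local Notation descent k := (res T (x k.+1) <= alpha * mu k).

Lemma mu_step k : (1 <= k)%nat -> mu k.+1 = mu_next T alpha x mu s k.
Proof. by move=> k1; have [_ [_ ->]] := proj2 safe k k1. Qed.

Lemma accepted_descent k : (1 <= k)%nat -> res T (y k) <= alpha * mu k -> descent k.
Proof.
move=> k1 accepted; have [_ [-> _]] := proj2 safe k k1.
by case: Rle_dec.
Qed.

Lemma mu_ge0 k : (1 <= k)%nat -> 0 <= mu k.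
Proof.
elim: k => [//|k IH] _; have [->|k_gt0] := posnP k; first by rewrite (proj1 safe); apply: sqrt_pos.
have mu_k := IH k_gt0; rewrite mu_step // /mu_next; case: descent_dec => //= _.
have r_ge0 : 0 <= res T (x k.+1) by apply: sqrt_pos.
move: s_params; destruct s as [th | | | th | m] => /= params; try nra.
- have := pos_INR (aa_count T alpha x mu k) => ?; apply: Rle_mult_inv_pos; nra.
- exact: fold_Rmax_ge0.
Qed.

Definition recent_max m k :=
  fold_right Rmax 0 (map (fun j => res T (x j.+1)) (Xi T alpha x mu m k)).

Lemma recent_max_le_mu m : s = RM m -> forall k, recent_max m k <= mu k.+1.
Proof.
move=> sRM; elim=> [|k IH]; first by rewrite /recent_max /Xi /= firstn_nil; apply: mu_ge0.
rewrite mu_step // /mu_next sRM; case: descent_dec => /= [_|no_descent]; first exact: Rle_refl.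
by rewrite /recent_max /Xi /=; case: descent_dec.
Qed.

Lemma mu_succ_le k : (1 <= k)%nat -> mu k.+1 <= mu k.
Proof.
move=> k1; have mu_k := mu_ge0 k k1; rewrite mu_step // /mu_next.
case: descent_dec => /= [descent_k|_]; last lra.
have r_ge0 : 0 <= res T (x k.+1) by apply: sqrt_pos.
have r_le : res T (x k.+1) <= mu k by nra.
move: s_params (@recent_max_le_mu); destruct s as [th | | | th | m] => /= params rm_le; try nra.
- have := pos_INR (aa_count T alpha x mu k) => ?.
  apply: Rdiv_le_of_le_mul; nra.
- destruct k as [|k]; first by [].
  destruct m as [|m]; first by [].
  rewrite /Xi /=; case: descent_dec => // _ /=; apply: Rmax_lub => //.
  exact: Rle_trans (fold_Rmax_map_firstn_le _ _ _ _ _ (leqnSn m)) (rm_le m.+1 erefl k).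
Qed.

Lemma mu_le k j : (1 <= k)%nat -> (k <= j)%nat -> mu j <= mu k.
Proof.
move=> k1; elim: j => [|j IH]; first by rewrite leqn0 => /eqP ->; lra.
rewrite leq_eqVlt => /orP [/eqP <-|kj]; first lra.
exact: Rle_trans (mu_succ_le _ (leq_trans k1 kj)) (IH kj).
Qed.

Hypothesis accepted_io :
  forall N, exists k, (N <= k)%nat /\ res T (y k) <= alpha * mu k.

Lemma descent_io N : exists k, (N <= k)%nat /\ (1 <= k)%nat /\ descent k.
Proof.
have [k [Nk accepted]] := accepted_io (maxn N 1); rewrite geq_max in Nk.
case/andP: Nk => Nk k1; exists k; do 2 split => //.
exact: accepted_descent.
Qed.

Fixpoint descents_after (k0 d : nat) : list nat :=
  match d with
  | O => nil
  | d.+1 => if descent_dec T alpha x mu (k0 + d).+1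
            then (k0 + d).+1 :: descents_after k0 d else descents_after k0 d
  end.

Lemma descent_indices_addn k0 d :
  descent_indices T alpha x mu (k0 + d) =
  descents_after k0 d ++ descent_indices T alpha x mu k0.
Proof.
elim: d => [|d IH]; first by rewrite addn0.
by rewrite addnS /=; case: descent_dec => /= _; rewrite IH.
Qed.

Lemma In_descents_after k0 d j :
  In j (descents_after k0 d) -> (k0 < j)%nat /\ descent j.
Proof.
elim: d => [//|d IH] /=; case: descent_dec => /= [descent_j|_]; last exact: IH.
by case=> [<-|/IH //]; split => //; rewrite ltnS leq_addr.
Qed.

Lemma length_descents_after_mono k0 :
  {homo (fun d => length (descents_after k0 d)) : d d' / (d <= d')%nat}.
Proof.
by apply: homo_leq => [//|? ? ?|d]; [exact: leq_trans | rewrite /=; case: descent_dec].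
Qed.

Lemma length_descents_after_unbounded k0 c :
  exists d, (c <= length (descents_after k0 d))%nat.
Proof.
elim: c => [|c [d cd]]; first by exists 0%nat.
have [j [dj [_ descent_j]]] := descent_io (k0 + d).+1.
have [e j_eq] : exists e, j = (k0 + e).+1 by exists (j.-1 - k0)%nat; lia.
subst j.
exists e.+1; rewrite /=; case: descent_dec => [_ /=|//].
by apply: leq_trans cd (length_descents_after_mono _ _ _ _); lia.
Qed.

Lemma RM_eventual_contraction m : s = RM m ->
  forall k0, (1 <= k0)%nat -> exists k, (k0 <= k)%nat /\ mu k <= alpha * mu k0.
Proof.
move=> sRM k0 k0_ge1; have [d0 md0] := length_descents_after_unbounded k0 m.
have [j [k0dj [j_ge1 descent_j]]] := descent_io (k0 + d0).
have [d j_eq] : exists d, j = (k0 + d)%nat by exists (j - k0)%nat; lia.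
have md : (m <= length (descents_after k0 d))%nat.
  by apply: leq_trans md0 (length_descents_after_mono _ _ _ _); lia.
exists j.+1; split; first lia.
rewrite mu_step // /mu_next sRM; case: descent_dec => //= _.
rewrite /Xi j_eq descent_indices_addn firstn_app.
have -> : (m - length (descents_after k0 d))%coq_nat = 0%nat by lia.
rewrite app_nil_r; apply: fold_Rmax_map_le => [|i i_in].
  by have := mu_ge0 k0 k0_ge1; nra.
have [k0i descent_i] := In_descents_after _ _ _ (In_firstn _ _ _ _ i_in).
have := mu_le k0 i k0_ge1 (ltnW k0i); have := mu_ge0 i (leq_trans k0_ge1 (ltnW k0i)); nra.
Qed.

Definition contraction_factor : R :=
  match s with GS theta => theta | EMA theta => 1 - theta * (1 - alpha) | _ => alpha end.

Lemma contraction_factor_range : 0 <= contraction_factor < 1.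
Proof.
move: s_params; rewrite /contraction_factor; destruct s => /= params; try lra.
by split; nra.
Qed.

Lemma mu_eventual_contraction : s <> AA ->
  forall k0, (1 <= k0)%nat -> exists k, (k0 <= k)%nat /\ mu k <= contraction_factor * mu k0.
Proof.
move=> sAA k0 k0_ge1.
have [[m sRM]|not_RM] := classic (exists m, s = RM m).
  by rewrite /contraction_factor sRM; exact: RM_eventual_contraction sRM k0 k0_ge1.
have [j [k0j [j_ge1 descent_j]]] := descent_io k0.
exists j.+1; split; first exact: leqW.
have mu_j_le := mu_le k0 j k0_ge1 k0j; have mu_j_ge0 := mu_ge0 j j_ge1.
have r_ge0 : 0 <= res T (x j.+1) by apply: sqrt_pos.
rewrite mu_step // /mu_next /contraction_factor; case: descent_dec => //= _.
move: s_params sAA not_RM; destruct s as [th | | | th | m] => /= params sAA' not_RM'.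
- nra.
- nra.
- by case: sAA'.
- have := Rmult_le_compat_l th _ _ (ltac:(lra)) descent_j.
  have : 0 <= 1 - th * (1 - alpha) by nra.
  nra.
- by case: not_RM'; exists m.
Qed.

Local Notation count k := (aa_count T alpha x mu k).

Lemma aa_count_succ k : (1 <= k)%nat ->
  count k.+1 = (count k + (if descent_dec T alpha x mu k then 1 else 0))%nat.
Proof. by case: k. Qed.

Lemma aa_count_mono k j : (1 <= k)%nat -> (k <= j)%nat -> (count k <= count j)%nat.
Proof.
move=> k1; elim: j => [|j IH]; first by rewrite leqn0 => /eqP ->.
rewrite leq_eqVlt => /orP [/eqP <- //|kj].
by rewrite aa_count_succ ?(leq_trans k1 kj) //; apply: leq_trans (IH kj) (leq_addr _ _).
Qed.

Lemma aa_count_unbounded M : exists k, (1 <= k)%nat /\ (M <= count k)%nat.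
Proof.
elim: M => [|M [k [k1 Mk]]]; first by exists 1%nat.
have [j [kj [j1 descent_j]]] := descent_io k; exists j.+1; split => //.
rewrite aa_count_succ //; case: descent_dec => //= _.
by rewrite addn1 ltnS; apply: leq_trans Mk (aa_count_mono _ _ k1 kj).
Qed.

(* ln (M + 1) grows by at most 1 / (M + 1) per descent, which the decrease of mu
   at that descent pays for. *)
Lemma AA_potential eps : s = AA -> 0 <= eps -> (forall k, (1 <= k)%nat -> eps <= mu k) ->
  forall k, (1 <= k)%nat -> mu k + (1 - alpha) * eps * ln (INR (count k) + 1) <= mu 1%nat.
Proof.
move=> sAA eps_ge0 mu_ge_eps; elim=> [//|k IH] _.
have [->|k1] := posnP k; first by rewrite /= Rplus_0_l ln_1; lra.
have := IH k1; have := mu_ge_eps k k1; have := pos_INR (count k).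
set M := INR (count k) => M_ge0 mu_k_ge IH_k.
have c_ge0 : 0 <= (1 - alpha) * eps by nra.
rewrite mu_step // /mu_next sAA aa_count_succ //; case: descent_dec => /= [descent_k|_].
  rewrite addn1 S_INR -/M.
  have := ln_succ_le (M + 1) (ltac:(lra)).
  have r_ge0 : 0 <= res T (x k.+1) by apply: sqrt_pos.
  have : (res T (x k.+1) + M * mu k) / (M + 1) + (1 - alpha) * eps * / (M + 1) <= mu k.
    rewrite -Rmult_plus_distr_r; apply: Rdiv_le_of_le_mul; nra.
  nra.
by rewrite addn0 -/M; lra.
Qed.

Lemma AA_small : s = AA -> forall eps, 0 < eps -> exists k, (1 <= k)%nat /\ mu k < eps.
Proof.
move=> sAA eps eps_gt0; apply: NNPP => no_small.
have mu_ge_eps k : (1 <= k)%nat -> eps <= mu k.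
  by move=> k1; apply: Rnot_lt_le => mu_lt; apply: no_small; exists k.
have c_gt0 : 0 < (1 - alpha) * eps by nra.
have [M ln_big] := ln_INR_unbounded (mu 1%nat / ((1 - alpha) * eps)).
have [k [k1 Mk]] := aa_count_unbounded M.
have := AA_potential eps sAA (Rlt_le _ _ eps_gt0) mu_ge_eps k k1; have := mu_ge_eps k k1.
have := ln_big _ Mk.
have : (1 - alpha) * eps * (mu 1%nat / ((1 - alpha) * eps)) = mu 1%nat by field; lra.
nra.
Qed.

Lemma mu_small eps : 0 < eps -> exists k, (1 <= k)%nat /\ mu k < eps.
Proof.
have [sAA|sAA] := classic (s = AA); first exact: AA_small.
apply: small_of_eventual_contraction contraction_factor_range mu_ge0 _ eps.
exact: mu_eventual_contraction.
Qed.

Theorem mu_cv0 : Un_cv mu 0.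
Proof. exact: cv0_of_nonincreasing mu_ge0 mu_le mu_small. Qed.

Hypothesis T_averaged : averaged T.

Lemma res_succ_le k : (1 <= k)%nat -> res T (x k.+1) <= Rmax (res T (x k)) (alpha * mu k).
Proof.
move=> k1; have [_ [-> _]] := proj2 safe k k1.
have := Rmax_l (res T (x k)) (alpha * mu k); have := Rmax_r (res T (x k)) (alpha * mu k).
case: Rle_dec => [accepted|rejected] /=; first lra.
by have := res_T_le T_averaged (x k); lra.
Qed.

Theorem res_cv0 : Un_cv (fun k => res T (x k)) 0.
Proof.
move=> eps eps_gt0; have [K muK] := mu_cv0 eps eps_gt0.
have alpha_mu_lt k : (maxn K 1 <= k)%nat -> alpha * mu k < eps.
  rewrite geq_max => /andP [/leP Kk k1]; have := muK k Kk; have := mu_ge0 k k1.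
  by rewrite /Rdist Rminus_0_r => mu_k_ge0; rewrite Rabs_right; nra.
have [j [Kj [j1 descent_j]]] := descent_io (maxn K 1).
have res_lt k : (j < k)%nat -> res T (x k) < eps.
  elim: k => [//|k IH]; rewrite ltnS leq_eqVlt => /orP [/eqP <-|jk].
    by have := alpha_mu_lt j Kj; lra.
  apply: Rle_lt_trans (res_succ_le k (leq_trans j1 (ltnW jk))) _.
  by apply: Rmax_lub_lt; [exact: IH | exact: alpha_mu_lt (leq_trans Kj (ltnW jk))].
exists j.+1 => k /leP jk; rewrite /Rdist Rminus_0_r Rabs_right; first exact: res_lt.
exact/Rle_ge/sqrt_pos.
Qed.
End SafeL2O.

Definition infinitely_often (P : nat -> Prop) := forall N, exists k, (N <= k)%nat /\ P k.

Lemma cluster_value_along (P : nat -> Prop) (f : nat -> R) B :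
  infinitely_often P -> (forall k, P k -> Rabs (f k) <= B) ->
  exists a, forall eps, 0 < eps -> infinitely_often (fun k => P k /\ Rabs (f k - a) < eps).
Proof.
move=> P_io f_bd.
(* [a] is the limit superior of [f] along [P] *)
pose E t := infinitely_often (fun k => P k /\ t <= f k).
have E_down t t' : t' <= t -> E t -> E t'.
  by move=> t't Et N; have [k [Nk [Pk tf]]] := Et N; exists k; do 2 split => //; lra.
have E_bound : bound E.
  exists B => t Et; have [k [_ [Pk tf]]] := Et 0%nat.
  by have := f_bd k Pk; have := Rle_abs (f k); lra.
have E_ne : exists t, E t.
  exists (- B) => N; have [k [Nk Pk]] := P_io N; exists k; do 2 split => //.
  by have := f_bd k Pk; have := Rle_abs (- f k); rewrite Rabs_Ropp; lra.
have [a [a_ub a_least]] := completeness E E_bound E_ne.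
exists a => eps eps_gt0 N.
have [N1 below] : exists N1, forall k, (N1 <= k)%nat -> P k -> f k < a + eps / 2.
  apply: NNPP => never; have : E (a + eps / 2).
    move=> M; apply: NNPP => none; apply: never; exists M => k Mk Pk.
    by apply: Rnot_le_lt => le; apply: none; exists k.
  by move/a_ub; lra.
have : E (a - eps / 2).
  apply: NNPP => not_E; have : is_upper_bound E (a - eps / 2).
    by move=> t Et; apply: Rnot_lt_le => lt; apply: not_E; apply: E_down Et; lra.
  by move/a_least; lra.
move/(_ (maxn N N1)) => [k [NN1k [Pk fk]]]; rewrite geq_max in NN1k.
case/andP: NN1k => Nk N1k; exists k; do 2 split => //.
by have := below k N1k Pk; move=> ?; apply: Rabs_def1; lra.
Qed.

Lemma subsequence_cv0_along (P : nat -> Prop) (g : nat -> R) :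
  (forall eps, 0 < eps -> infinitely_often (fun k => P k /\ g k < eps)) ->
  exists Q : nat -> Prop, (forall k, Q k -> P k) /\ infinitely_often Q /\
    forall eps, 0 < eps -> exists N, forall k, (N <= k)%nat -> Q k -> g k < eps.
Proof.
move=> g_small.
have pick j N : {k | (N <= k)%nat /\ P k /\ g k < / (INR j + 1)}.
  apply: constructive_indefinite_description; apply: g_small.
  by apply: Rinv_0_lt_compat; have := pos_INR j; lra.
pose fix phi j := match j with
  | O => sval (pick O O)
  | j.+1 => sval (pick j.+1 (phi j).+1)
  end.
have phi_spec j : P (phi j) /\ g (phi j) < / (INR j + 1).
  by case: j => [|j]; [exact: (proj2 (proj2_sig (pick _ _))) | exact: (proj2 (proj2_sig (pick _ _)))].
have phi_lt j : (phi j < phi j.+1)%nat by exact: (proj1 (proj2_sig (pick j.+1 (phi j).+1))).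
have phi_mono : {homo phi : j j' / (j <= j')%nat}.
  by apply: homo_leq => [//|? ? ?|j]; [exact: leq_trans | exact: ltnW].
exists (fun k => exists j, phi j = k); split; first by move=> k [j <-]; case: (phi_spec j).
split.
  move=> N; exists (phi N); split; last by exists N.
  by elim: N => [//|N IH]; apply: leq_ltn_trans IH (phi_lt N).
move=> eps eps_gt0; have [J J_big] := INR_unbounded (/ eps).
exists (phi J).+1 => k Jk [j phi_jk]; subst k.
have Jj : (J < j)%nat by rewrite ltnNge; apply/negP => /phi_mono; lia.
apply: Rlt_le_trans (proj2 (phi_spec j)) _.
have INR_Jj : INR J + 1 <= INR j by rewrite -S_INR; apply/le_INR/leP.
rewrite -[eps]Rinv_inv; apply: Rlt_le; apply: Rinv_lt_contravar; last lra.
by apply: Rmult_lt_0_compat; [apply: Rinv_0_lt_compat | have := pos_INR j]; lra.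
Qed.

Section ClusterPoints.
Context {n : nat}.

Lemma subsequence_cv_coords (u : nat -> vec n) (P : nat -> Prop) B (l : seq 'I_n) :
  infinitely_often P -> (forall k, P k -> norm (u k) <= B) ->
  exists (Q : nat -> Prop) (z : vec n), (forall k, Q k -> P k) /\ infinitely_often Q /\
    forall eps, 0 < eps -> exists M, forall k, (M <= k)%nat -> Q k ->
      forall i, i \in l -> Rabs (u k i - z i) < eps.
Proof.
move=> P_io u_bd; elim: l => [|i l [Q [z [QP [Q_io Q_cv]]]]].
  by exists P, (fun _ => 0); do 2 split => //; exists 0%nat.
have ui_bd k : Q k -> Rabs (u k i) <= B.
  by move/QP/u_bd; apply: Rle_trans (Rabs_coord_le_norm _ _).
have [a a_cl] := cluster_value_along _ _ _ Q_io ui_bd.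
have [Q' [Q'Q [Q'_io Q'_cv]]] := subsequence_cv0_along _ _ a_cl.
exists Q', (fun j => if j == i then a else z j); split; first by move=> k /Q'Q /QP.
split => // eps eps_gt0; have [M1 cv1] := Q_cv eps eps_gt0; have [M2 cv2] := Q'_cv eps eps_gt0.
exists (maxn M1 M2) => k; rewrite geq_max => /andP [M1k M2k] Q'k j; rewrite inE.
case: eqP => [-> _|_ /= jl]; first exact: cv2.
exact: cv1 (Q'Q k Q'k) j jl.
Qed.

Lemma cluster_point_along (u : nat -> vec n) (P : nat -> Prop) N B :
  infinitely_often P -> (forall k, (N <= k)%nat -> norm (u k) <= B) ->
  exists z, forall eps, 0 < eps -> infinitely_often (fun k => P k /\ norm (vsub (u k) z) < eps).
Proof.
move=> P_io u_bd.
have PN_io : infinitely_often (fun k => P k /\ (N <= k)%nat).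
  move=> M; have [k [MNk Pk]] := P_io (maxn M N); rewrite geq_max in MNk.
  by case/andP: MNk => Mk Nk; exists k.
have [Q [z [QP [Q_io Q_cv]]]] :=
  subsequence_cv_coords _ _ B (index_enum 'I_n) PN_io (fun k PNk => u_bd k PNk.2).
exists z => eps eps_gt0 K.
have sqrt_n_ge0 := sqrt_pos (INR n).
have d_gt0 : 0 < eps / (sqrt (INR n) + 1) by apply: Rdiv_lt_0_compat; lra.
have [M cv] := Q_cv _ d_gt0; have [k [KMk Qk]] := Q_io (maxn K M).
rewrite geq_max in KMk; case/andP: KMk => Kk Mk; exists k; split => //.
split; first exact: (QP k Qk).1.
have : norm (vsub (u k) z) <= sqrt (INR n) * (eps / (sqrt (INR n) + 1)).
  apply: norm_le_coord_bound; first lra.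
  by move=> i; apply: Rlt_le; apply: cv Mk Qk i (mem_index_enum i).
have : eps / (sqrt (INR n) + 1) * (sqrt (INR n) + 1) = eps by field; lra.
nra.
Qed.

Lemma cluster_point_of_along (u : nat -> vec n) (P : nat -> Prop) z :
  (forall eps, 0 < eps -> infinitely_often (fun k => P k /\ norm (vsub (u k) z) < eps)) ->
  cluster_point u z.
Proof. by move=> z_cl eps eps_gt0 N; have [k [Nk [_ near]]] := z_cl eps eps_gt0 N; exists k. Qed.

Lemma dist_cv0_of_clusters (C : vec n -> Prop) (u : nat -> vec n) (d : nat -> R) N B :
  (forall k, (N <= k)%nat -> norm (u k) <= B) -> (forall z, cluster_point u z -> C z) ->
  (forall k, is_inf (dists C (u k)) (d k)) -> Un_cv d 0.
Proof.
move=> u_bd clusters_C d_inf eps eps_gt0.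
have d_ge0 k : 0 <= d k by apply: (proj2 (d_inf k)) => t [w [_ ->]]; apply: norm_ge0.
apply: NNPP => not_cv.
have far_io : infinitely_often (fun k => eps <= d k).
  move=> M; apply: NNPP => none; apply: not_cv; exists M => k /leP Mk.
  rewrite /Rdist Rminus_0_r Rabs_right; last exact/Rle_ge.
  by apply: Rnot_le_lt => far; apply: none; exists k.
have [z z_cl] := cluster_point_along _ _ _ _ far_io u_bd.
have Cz := clusters_C z (cluster_point_of_along _ _ _ z_cl).
have [k [_ [far near]]] := z_cl eps eps_gt0 0%nat.
have : d k <= norm (vsub (u k) z) by apply: (proj1 (d_inf k)); exists z.
lra.
Qed.

Lemma converges_to_unique_cluster (u : nat -> vec n) z N B :
  (forall k, (N <= k)%nat -> norm (u k) <= B) ->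
  (forall z', cluster_point u z' -> z' = z) -> converges_to u z.
Proof.
move=> u_bd unique eps eps_gt0; apply: NNPP => not_cv.
have far_io : infinitely_often (fun k => eps <= norm (vsub (u k) z)).
  move=> M; apply: NNPP => none; apply: not_cv; exists M => k Mk.
  by apply: Rnot_le_lt => far; apply: none; exists k.
have [z' z'_cl] := cluster_point_along _ _ _ _ far_io u_bd.
have z'z := unique z' (cluster_point_of_along _ _ _ z'_cl); subst z'.
have [k [_ [far near]]] := z'_cl eps eps_gt0 0%nat.
lra.
Qed.

Lemma eventually_bounded_of_coercive (f : vec n -> R) (u : nat -> vec n) :
  (forall M, exists R0, forall z, R0 <= norm z -> M <= f z) -> Un_cv (fun k => f (u k)) 0 ->
  exists N B, forall k, (N <= k)%nat -> norm (u k) <= B.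
Proof.
move=> coercive f_cv0; have [R0 big] := coercive 1; have [N small] := f_cv0 1 Rlt_0_1.
exists N, R0 => k /leP Nk; apply: Rnot_lt_le => /Rlt_le /big.
by have := small k Nk; rewrite /Rdist Rminus_0_r; have := Rle_abs (f (u k)); lra.
Qed.

Lemma cluster_point_Fix (T : vec n -> vec n) (u : nat -> vec n) z :
  averaged T -> Un_cv (fun k => res T (u k)) 0 -> cluster_point u z -> Fix T z.
Proof.
move=> T_averaged res_cv0 z_cl; apply: Fix_of_res_le0; apply: Rnot_lt_le => res_gt0.
have e_gt0 : 0 < res T z / 4 by lra.
have [N small] := res_cv0 _ e_gt0; have [k [/leP Nk near]] := z_cl _ e_gt0 N.
have := small k Nk; have := res_le_res_add T_averaged z (u k).
by rewrite /Rdist Rminus_0_r; have := Rle_abs (res T (u k)); lra.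
Qed.
End ClusterPoints.

Theorem corollary1 (n : nat) (T : vec n -> vec n) (L : nat -> vec n -> vec n)
  (alpha : R) (s : scheme) (x y : nat -> vec n) (mu : nat -> R) :
  averaged T ->
  (exists p, Fix T p) ->
  (forall M : R, exists R0 : R, forall z : vec n, R0 <= norm z -> M <= res T z) ->
  0 < alpha < 1 ->
  scheme_params s ->
  safe_l2o T L alpha s x y mu ->
  (forall N : nat, exists k : nat, (N <= k)%nat /\ res T (y k) <= alpha * mu k) ->
  Un_cv mu 0 /\
  (forall d : nat -> R, (forall k, is_inf (dists (Fix T) (x k)) (d k)) -> Un_cv d 0) /\
  ((exists! z, cluster_point x z) -> exists p, Fix T p /\ converges_to x p).
Proof.
move=> T_averaged _ coercive alpha_range s_params safe accepted_io.
have res_cv := res_cv0 safe alpha_range s_params accepted_io T_averaged.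
have [N [B x_bd]] := eventually_bounded_of_coercive _ _ coercive res_cv.
have clusters_Fix z : cluster_point x z -> Fix T z := cluster_point_Fix _ _ _ T_averaged res_cv.
split; first exact: mu_cv0 safe alpha_range s_params accepted_io.
split; first by move=> d; apply: dist_cv0_of_clusters x_bd clusters_Fix.
move=> [z [z_cl z_unique]]; exists z; split; first exact: clusters_Fix.
by apply: converges_to_unique_cluster x_bd _ => z' /z_unique.
Qed.
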